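(* For every $a>0$ and $\alpha>0$, the second Robin eigenvalue of an interval $I_a$ of length $a$ satisfies \[ \frac{\big(2\pi-a\alpha+\sqrt{4\pi^2+12a\alpha\pi+\alpha^2a^2}\big)^2}{16a^2}\le\lambda_2(I_a,\alpha) \] and \[ \lambda_2(I_a,\alpha)\le\begin{cases}\Big(\dfrac{\pi}{2a}+\sqrt{\dfrac{\pi^2}{4a^2}+\dfrac{2\alpha}{a}}\Big)^2, & a\alpha\le\dfrac{\pi^2}{2},\\[2ex] \dfrac{\pi^2}{16a^4\alpha^2}\Big(4a\alpha-\pi^2+\sqrt{\pi^4+16a^2\alpha^2}\Big)^2, & a\alpha\ge\dfrac{\pi^2}{2}.\end{cases} \]
   Context: For an interval $I_a\subset\mathbb{R}$ of length $a>0$ and $\alpha>0$, $\lambda_1(I_a,\alpha)<\lambda_2(I_a,\alpha)<\cdots$ denote the eigenvalues of the Robin problem $-u''=\lambda u$ on $I_a$ with $\partial_\nu u+\alpha u=0$ at both endpoints ($\partial_\nu$ the outward derivative). Equivalently, $\lambda_2(I_a,\alpha)$ is the smallest root in $(\pi^2/a^2,4\pi^2/a^2)$ of $\alpha=-\sqrt\lambda\cot(a\sqrt\lambda/2)$. *)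

From Stdlib Require Import Reals.
Open Scope R_scope.

(* Robin secular function for the second eigenvalue on an interval of length a:
   alpha = - sqrt(lambda) * cot(a sqrt(lambda) / 2), with cot = cos / sin. *)
Definition robin_secular (a lambda : R) : R :=
  - sqrt lambda * (cos (a * sqrt lambda / 2) / sin (a * sqrt lambda / 2)).

Definition is_robin_lambda2 (a alpha l : R) : Prop :=
  PI ^ 2 / a ^ 2 < l < 4 * PI ^ 2 / a ^ 2 /\
  alpha = robin_secular a l /\
  (forall m, PI ^ 2 / a ^ 2 < m < 4 * PI ^ 2 / a ^ 2 ->
     alpha = robin_secular a m -> l <= m).

(* Writing sqrt l = (2 y + PI) / a with 0 < y < PI/2, the secular equation becomes
   a alpha = (2 y + PI) tan y.  The right-hand side increases from 0 to +oo on
   (0, PI/2), so lambda_2 exists and is given by the unique solution y.  On (0, PI/2)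
   we have the elementary estimates
     y <= tan y,   tan y <= 4 y / (PI - 2 y),   PI^3 y / ((PI^2 - 4 y^2) (PI + 2 y)) <= tan y,
   obtained from low-order Taylor bounds of sin and cos, near 0 at y and near PI/2 at
   PI/2 - y.  Plugged into the equation, each becomes a quadratic inequality for
   t = 2 y + PI, and comparing t with the positive root of that quadratic gives the
   three bounds. *)

From Stdlib Require Import Reals Lra.
Open Scope R_scope.

Lemma sin_ge_cubic x : 0 <= x <= PI -> x - x ^ 3 / 6 <= sin x.
Proof.
  intros [hx0 hx1]. destruct (sin_bound x 0 hx0 hx1) as [hlb _].
  unfold sin_approx, sin_term in hlb; simpl in hlb. lra.
Qed.

Lemma cos_quadratic_quartic x : - PI / 2 <= x <= PI / 2 ->
  1 - x ^ 2 / 2 <= cos x <= 1 - x ^ 2 / 2 + x ^ 4 / 24.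
Proof.
  intros [hx0 hx1]. destruct (cos_bound x 0 hx0 hx1) as [hlb hub].
  unfold cos_approx, cos_term in hlb, hub; simpl in hlb, hub. lra.
Qed.

Lemma sin_le_id x : 0 <= x -> sin x <= x.
Proof. intros [hx | <-]; [left; apply sin_lt_x; exact hx | rewrite sin_0; lra]. Qed.

Lemma PI_bounds : 3 < PI < 16 / 5.
Proof.
  split; [pose proof PI2_3_2; lra |].
  apply Rnot_le_lt; intros hPI.
  assert (hcos : 0 <= cos (8 / 5)) by (apply cos_ge_0; lra).
  destruct (cos_quadratic_quartic (8 / 5)) as [_ hub]; [lra |]. lra.
Qed.

Lemma id_mul_cos_le_sin y : 0 < y < PI / 2 -> y * cos y <= sin y.
Proof.
  intros hy. pose proof PI_bounds.
  destruct (Rle_or_lt y 1) as [hy1 | hy1].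
  - pose proof (sin_ge_cubic y ltac:(lra)).
    destruct (cos_quadratic_quartic y ltac:(lra)) as [_ hcos].
    assert (y * cos y <= y * (1 - y ^ 2 / 2 + y ^ 4 / 24)) by (apply Rmult_le_compat_l; lra).
    assert (0 <= y ^ 3 * (8 - y ^ 2)) by (apply Rmult_le_pos; [apply pow_le |]; nra).
    nra.
  - set (z := PI / 2 - y). assert (hz : 0 < z < PI / 2 - 1) by (unfold z; lra).
    replace y with (PI / 2 - z) by (unfold z; ring). clearbody z.
    rewrite sin_shift, cos_shift.
    pose proof (sin_le_id z ltac:(lra)).
    destruct (cos_quadratic_quartic z ltac:(lra)) as [hcos _].
    assert ((PI / 2 - z) * sin z <= (PI / 2 - z) * z) by (apply Rmult_le_compat_l; lra).
    assert (PI * z <= 16 / 5 * (6 / 10)) by (apply Rmult_le_compat; lra).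
    nra.
Qed.

Lemma sin_mul_le_cos y : 0 < y < PI / 2 -> sin y * (PI - 2 * y) <= 4 * y * cos y.
Proof.
  intros hy. pose proof PI_bounds.
  destruct (Rle_or_lt y 1) as [hy1 | hy1].
  - pose proof (sin_le_id y ltac:(lra)).
    destruct (cos_quadratic_quartic y ltac:(lra)) as [hcos _].
    assert (sin y * (PI - 2 * y) <= y * (PI - 2 * y)) by (apply Rmult_le_compat_r; lra).
    assert (4 * y * (1 - y ^ 2 / 2) <= 4 * y * cos y) by (apply Rmult_le_compat_l; lra).
    nra.
  - set (z := PI / 2 - y). assert (hz : 0 < z < PI / 2 - 1) by (unfold z; lra).
    replace y with (PI / 2 - z) by (unfold z; ring). clearbody z.
    rewrite sin_shift, cos_shift.
    pose proof (sin_ge_cubic z ltac:(lra)).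
    pose proof (COS_bound z).
    assert (1 <= (PI - 2 * z) * (1 - z ^ 2 / 6)).
    { assert (z ^ 2 <= 1) by nra.
      assert (2 * (5 / 6) <= (PI - 2 * z) * (1 - z ^ 2 / 6)) by (apply Rmult_le_compat; lra).
      lra. }
    assert ((PI - 2 * z) * (z - z ^ 3 / 6) <= (PI - 2 * z) * sin z)
      by (apply Rmult_le_compat_l; lra).
    nra.
Qed.

Lemma cubic_estimate_near_0 y : 0 <= y <= 1 ->
  PI ^ 3 * (1 - y ^ 2 / 2 + y ^ 4 / 24)
    <= (1 - y ^ 2 / 6) * (PI ^ 2 - 4 * y ^ 2) * (PI + 2 * y).
Proof.
  intros hy. pose proof PI_bounds.
  set (q := 2 * PI ^ 2 - 4 * PI * y + PI ^ 3 / 3 * y - 8 * y ^ 2 - PI ^ 2 / 3 * y ^ 2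
            + (2 * PI / 3 - PI ^ 3 / 24) * y ^ 3 + 4 / 3 * y ^ 4).
  assert (hdiff : (1 - y ^ 2 / 6) * (PI ^ 2 - 4 * y ^ 2) * (PI + 2 * y)
                  - PI ^ 3 * (1 - y ^ 2 / 2 + y ^ 4 / 24) = y * q) by (unfold q; field).
  assert (hq : 0 <= q).
  { assert (0 <= (2 * PI / 3 - PI ^ 3 / 24) * y ^ 3)
      by (apply Rmult_le_pos; [nra | apply pow_le; lra]).
    assert (0 <= y ^ 4) by (apply pow_le; lra).
    assert (0 <= PI * y * (PI ^ 2 / 3 - 3)) by (apply Rmult_le_pos; nra).
    assert (0 <= (1 - y ^ 2) * (8 + PI ^ 2 / 3)) by (apply Rmult_le_pos; nra).
    unfold q. nra. }
  nra.
Qed.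

Lemma cubic_estimate_near_pi2 z : 0 <= z <= PI / 2 - 1 ->
  PI ^ 3 * (PI / 2 - z) <= 8 * (PI - z) ^ 2 * (1 - z ^ 2 / 2).
Proof.
  intros hz. pose proof PI_bounds.
  (* Affine lower bounds for (PI - z)^2 and 1 - z^2/2 leave an inequality that is
     linear in z up to a nonnegative term; it is checked at z = PI/2 - 1. *)
  assert (PI ^ 2 - 2 * PI * z <= (PI - z) ^ 2) by nra.
  assert (1 - 3 / 10 * z <= 1 - z ^ 2 / 2) by nra.
  assert (8 * (PI ^ 2 - 2 * PI * z) * (1 - 3 / 10 * z) <= 8 * (PI - z) ^ 2 * (1 - z ^ 2 / 2)).
  { rewrite !Rmult_assoc. apply Rmult_le_compat_l; [lra |]. apply Rmult_le_compat; nra. }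
  assert (PI * (PI ^ 2 - 12 / 5 * PI - 16) < 0) by nra.
  assert (0 <= (PI / 2 - 1 - z) * - (PI * (PI ^ 2 - 12 / 5 * PI - 16)))
    by (apply Rmult_le_pos; lra).
  assert (0 < PI * (-22 / 10 * PI ^ 2 + 24 / 10 * PI + 16)) by nra.
  nra.
Qed.

Lemma cubic_mul_cos_le_sin y : 0 < y < PI / 2 ->
  PI ^ 3 * y * cos y <= sin y * (PI ^ 2 - 4 * y ^ 2) * (PI + 2 * y).
Proof.
  intros hy. pose proof PI_bounds.
  destruct (Rle_or_lt y 1) as [hy1 | hy1].
  - pose proof (sin_ge_cubic y ltac:(lra)).
    destruct (cos_quadratic_quartic y ltac:(lra)) as [_ hcos].
    pose proof (cubic_estimate_near_0 y ltac:(lra)).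
    assert (0 <= (PI ^ 2 - 4 * y ^ 2) * (PI + 2 * y)) by (apply Rmult_le_pos; nra).
    assert (PI ^ 3 * y * cos y <= PI ^ 3 * y * (1 - y ^ 2 / 2 + y ^ 4 / 24))
      by (apply Rmult_le_compat_l; [apply Rmult_le_pos; [apply pow_le |] |]; lra).
    assert ((y - y ^ 3 / 6) * ((PI ^ 2 - 4 * y ^ 2) * (PI + 2 * y))
            <= sin y * ((PI ^ 2 - 4 * y ^ 2) * (PI + 2 * y)))
      by (apply Rmult_le_compat_r; lra).
    assert (y * (PI ^ 3 * (1 - y ^ 2 / 2 + y ^ 4 / 24))
            <= y * ((1 - y ^ 2 / 6) * (PI ^ 2 - 4 * y ^ 2) * (PI + 2 * y)))
      by (apply Rmult_le_compat_l; lra).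
    nra.
  - set (z := PI / 2 - y). assert (hz : 0 < z < PI / 2 - 1) by (unfold z; lra).
    replace y with (PI / 2 - z) by (unfold z; ring). clearbody z.
    rewrite sin_shift, cos_shift, Rmult_assoc.
    replace ((PI ^ 2 - 4 * (PI / 2 - z) ^ 2) * (PI + 2 * (PI / 2 - z)))
      with (8 * z * (PI - z) ^ 2) by field.
    pose proof (sin_le_id z ltac:(lra)).
    destruct (cos_quadratic_quartic z ltac:(lra)) as [hcos _].
    pose proof (cubic_estimate_near_pi2 z ltac:(lra)).
    assert (PI ^ 3 * (PI / 2 - z) * sin z <= PI ^ 3 * (PI / 2 - z) * z)
      by (apply Rmult_le_compat_l; [apply Rmult_le_pos; [apply pow_le |] |]; lra).
    assert (0 <= 8 * z * (PI - z) ^ 2) by (apply Rmult_le_pos; [lra | apply pow_le; lra]).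
    assert ((1 - z ^ 2 / 2) * (8 * z * (PI - z) ^ 2) <= cos z * (8 * z * (PI - z) ^ 2))
      by (apply Rmult_le_compat_r; lra).
    assert (z * (PI ^ 3 * (PI / 2 - z)) <= z * (8 * (PI - z) ^ 2 * (1 - z ^ 2 / 2)))
      by (apply Rmult_le_compat_l; lra).
    nra.
Qed.

Definition robin_phase (y : R) : R := (2 * y + PI) * tan y.

Lemma robin_secular_shift a m :
  robin_secular a m = sqrt m * tan ((a * sqrt m - PI) / 2).
Proof.
  unfold robin_secular, tan.
  replace (a * sqrt m / 2) with ((a * sqrt m - PI) / 2 + PI / 2) by field.
  rewrite cos_plus, sin_plus, cos_PI2, sin_PI2.
  rewrite !Rmult_0_r, !Rmult_1_r, Rplus_0_l. unfold Rminus, Rdiv. ring.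
Qed.

Lemma robin_secular_phase a y : 0 < a -> 0 < y < PI / 2 ->
  a * robin_secular a (((2 * y + PI) / a) ^ 2) = robin_phase y.
Proof.
  intros ha hy. pose proof PI_bounds.
  rewrite robin_secular_shift, sqrt_pow2 by (apply Rlt_le, Rdiv_lt_0_compat; lra).
  replace ((a * ((2 * y + PI) / a) - PI) / 2) with y by (field; lra).
  unfold robin_phase. field. lra.
Qed.

Lemma robin_phase_lt x y : 0 <= x -> x < y -> y < PI / 2 ->
  robin_phase x < robin_phase y.
Proof.
  intros hx hxy hy. pose proof PI_bounds.
  assert (htan : tan x < tan y) by (apply tan_increasing; lra).
  assert (htan0 : 0 <= tan x).
  { destruct hx as [hx | <-]; [left; apply tan_gt_0; lra | rewrite tan_0; lra]. }
  unfold robin_phase. apply Rmult_le_0_lt_compat; lra.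
Qed.

Lemma robin_phase_inj x y : 0 < x < PI / 2 -> 0 < y < PI / 2 ->
  robin_phase x = robin_phase y -> x = y.
Proof.
  intros hx hy heq.
  destruct (Rtotal_order x y) as [hlt | [-> | hgt]]; [| reflexivity |].
  - pose proof (robin_phase_lt x y ltac:(lra) hlt ltac:(lra)). lra.
  - pose proof (robin_phase_lt y x ltac:(lra) hgt ltac:(lra)). lra.
Qed.

Lemma robin_phase_surj b : 0 < b -> exists y, 0 < y < PI / 2 /\ robin_phase y = b.
Proof.
  intros hb. pose proof PI_bounds.
  (* Solve for v = tan y instead of y, so that the intermediate value theorem
     applies to a function continuous on all of R. *)
  set (f := (((fct_cte 2 * atan)%F + fct_cte PI) * id - fct_cte b)%F).
  assert (hf : forall v, f v = (2 * atan v + PI) * v - b) by reflexivity.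
  assert (hfc : continuity f).
  { assert (hatan : continuity atan)
      by (intro; apply derivable_continuous_pt, derivable_pt_atan).
    repeat first [ apply continuity_minus | apply continuity_plus | apply continuity_mult
                 | apply continuity_const; intros ? ?; reflexivity
                 | apply derivable_continuous, derivable_id | exact hatan ]. }
  assert (hbPI : 0 < b / PI) by (apply Rdiv_lt_0_compat; lra).
  assert (hatan_pos : 0 < atan (b / PI)) by (rewrite <- atan_0; apply atan_increasing; lra).
  destruct (IVT f 0 (b / PI) hfc hbPI) as [v [hv hfv]].
  - rewrite hf, atan_0. lra.
  - rewrite hf. replace ((2 * atan (b / PI) + PI) * (b / PI) - b)
      with (2 * atan (b / PI) * (b / PI)) by (field; lra).
    apply Rmult_lt_0_compat; lra.
  - rewrite hf in hfv.
    assert (hv0 : 0 < v).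
    { destruct (Req_dec v 0) as [E | E]; [rewrite E, atan_0 in hfv; lra | lra]. }
    exists (atan v). split.
    + split; [rewrite <- atan_0; apply atan_increasing; lra |].
      pose proof (atan_bound v); lra.
    + unfold robin_phase. rewrite tan_atan. lra.
Qed.

Lemma robin_interval_of_phase a y : 0 < a -> 0 < y < PI / 2 ->
  PI ^ 2 / a ^ 2 < ((2 * y + PI) / a) ^ 2 < 4 * PI ^ 2 / a ^ 2.
Proof.
  intros ha hy. pose proof PI_bounds.
  replace (PI ^ 2 / a ^ 2) with ((PI / a) ^ 2) by (field; lra).
  replace (4 * PI ^ 2 / a ^ 2) with ((2 * PI / a) ^ 2) by (field; lra).
  assert (hainv : 0 < / a) by (apply Rinv_0_lt_compat; lra).
  assert (PI * / a < (2 * y + PI) * / a < 2 * PI * / a)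
    by (split; apply Rmult_lt_compat_r; lra).
  unfold Rdiv. split; nra.
Qed.

Lemma robin_phase_of_interval a m : 0 < a -> PI ^ 2 / a ^ 2 < m < 4 * PI ^ 2 / a ^ 2 ->
  exists y, 0 < y < PI / 2 /\ m = ((2 * y + PI) / a) ^ 2.
Proof.
  intros ha hm. pose proof PI_bounds.
  assert (hm0 : 0 <= m) by (assert (0 < PI ^ 2 / a ^ 2) by (apply Rdiv_lt_0_compat; nra); lra).
  rewrite <- (pow2_sqrt m hm0) in hm |- *. pose proof (sqrt_pos m).
  set (s := sqrt m) in *. clearbody s.
  assert (ht : PI < a * s < 2 * PI).
  { assert (PI ^ 2 < (a * s) ^ 2 < (2 * PI) ^ 2).
    { replace (PI ^ 2) with (PI ^ 2 / a ^ 2 * a ^ 2) by (field; lra).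
      replace ((2 * PI) ^ 2) with (4 * PI ^ 2 / a ^ 2 * a ^ 2) by (field; lra).
      rewrite Rpow_mult_distr, (Rmult_comm (a ^ 2)).
      split; apply Rmult_lt_compat_r; nra. }
    assert (0 <= a * s) by (apply Rmult_le_pos; lra).
    nra. }
  exists ((a * s - PI) / 2). split; [lra |]. f_equal. field. lra.
Qed.

Lemma is_robin_lambda2_phase a alpha l : 0 < a ->
  is_robin_lambda2 a alpha l <->
  exists y, 0 < y < PI / 2 /\ l = ((2 * y + PI) / a) ^ 2 /\ robin_phase y = a * alpha.
Proof.
  intros ha. split.
  - intros [hl [hsec _]].
    destruct (robin_phase_of_interval a l ha hl) as [y [hy ->]].
    exists y. split; [exact hy | split; [reflexivity |]].
    rewrite <- (robin_secular_phase a y ha hy), hsec. reflexivity.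
  - intros [y [hy [-> hphase]]].
    assert (hsec : alpha = robin_secular a (((2 * y + PI) / a) ^ 2)).
    { apply (Rmult_eq_reg_l a); [| lra]. rewrite robin_secular_phase; auto. }
    split; [exact (robin_interval_of_phase a y ha hy) | split; [exact hsec |]].
    intros m hm hsecm.
    destruct (robin_phase_of_interval a m ha hm) as [y' [hy' ->]].
    assert (y' = y) as ->.
    { apply robin_phase_inj; auto.
      rewrite <- (robin_secular_phase a y' ha hy'), <- hsecm. auto. }
    lra.
Qed.

Lemma robin_lambda2_exists a alpha : 0 < a -> 0 < alpha ->
  exists l, is_robin_lambda2 a alpha l.
Proof.
  intros ha halpha.
  destruct (robin_phase_surj (a * alpha)) as [y [hy hphase]]; [nra |].
  exists (((2 * y + PI) / a) ^ 2). apply is_robin_lambda2_phase; [exact ha |].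
  exists y. auto.
Qed.

Lemma quadratic_le_reg A B u v : 0 < A -> 0 <= 2 * A * u + B ->
  A * v ^ 2 + B * v <= A * u ^ 2 + B * u -> v <= u.
Proof.
  intros hA hu hq. apply Rnot_lt_le. intros huv.
  assert (0 < (v - u) * (A * (v + u) + B)) by (apply Rmult_lt_0_compat; nra).
  nra.
Qed.

Lemma sqr_div_le r t a : 0 < a -> 0 <= r <= t -> (r / a) ^ 2 <= (t / a) ^ 2.
Proof.
  intros ha hrt. apply pow_incr.
  assert (0 < / a) by (apply Rinv_0_lt_compat; lra).
  unfold Rdiv. split; [apply Rmult_le_pos | apply Rmult_le_compat_r]; lra.
Qed.

Lemma sqrt_div_sqr x c : 0 < c -> sqrt (x / c ^ 2) = sqrt x / c.
Proof.
  intros hc. rewrite sqrt_div_alt, sqrt_pow2; [reflexivity | lra | apply pow_lt; lra].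
Qed.

Section RobinBounds.

Variables a alpha y : R.
Hypotheses (ha : 0 < a) (halpha : 0 < alpha) (hy : 0 < y < PI / 2)
  (hphase : robin_phase y = a * alpha).

Lemma robin_phase_sin_cos : a * alpha * cos y = (2 * y + PI) * sin y.
Proof.
  assert (0 < cos y) by (apply cos_gt_0; lra).
  rewrite <- hphase. unfold robin_phase, tan. field. lra.
Qed.

Lemma robin_lambda2_ge :
  (2 * PI - a * alpha + sqrt (4 * PI ^ 2 + 12 * a * alpha * PI + alpha ^ 2 * a ^ 2)) ^ 2
    / (16 * a ^ 2) <= ((2 * y + PI) / a) ^ 2.
Proof.
  pose proof PI_bounds.
  assert (hcos : 0 < cos y) by (apply cos_gt_0; lra).
  assert (htan : a * alpha * (PI - 2 * y) <= 4 * y * (2 * y + PI)).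
  { apply (Rmult_le_reg_r (cos y)); [exact hcos |].
    pose proof (sin_mul_le_cos y hy). pose proof robin_phase_sin_cos.
    assert ((2 * y + PI) * (sin y * (PI - 2 * y)) <= (2 * y + PI) * (4 * y * cos y))
      by (apply Rmult_le_compat_l; lra).
    nra. }
  replace (4 * PI ^ 2 + 12 * a * alpha * PI + alpha ^ 2 * a ^ 2)
    with (4 * PI ^ 2 + 12 * PI * (a * alpha) + (a * alpha) ^ 2) by ring.
  set (b := a * alpha) in *. assert (hb : 0 < b) by (unfold b; nra).
  set (t := 2 * y + PI) in *.
  set (D := 4 * PI ^ 2 + 12 * PI * b + b ^ 2).
  assert (hu : sqrt D ^ 2 = D) by (apply pow2_sqrt; unfold D; nra).
  pose proof (sqrt_pos D). set (u := sqrt D) in *.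
  (* the positive root of 2 t^2 + (b - 2 PI) t - 2 PI b *)
  set (r := (2 * PI - b + u) / 4).
  assert (hr : 0 <= r) by (unfold r, D in *; nra).
  assert (hrt : r <= t).
  { apply (quadratic_le_reg 2 (b - 2 * PI)); [lra | unfold t; lra |].
    unfold r, t, D in *. nra. }
  replace ((2 * PI - b + u) ^ 2 / (16 * a ^ 2)) with ((r / a) ^ 2) by (unfold r; field; lra).
  apply sqr_div_le; lra.
Qed.

Lemma robin_lambda2_le_small :
  ((2 * y + PI) / a) ^ 2 <= (PI / (2 * a) + sqrt (PI ^ 2 / (4 * a ^ 2) + 2 * alpha / a)) ^ 2.
Proof.
  pose proof PI_bounds.
  assert (hcos : 0 < cos y) by (apply cos_gt_0; lra).
  assert (htan : (2 * y + PI) * y <= a * alpha).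
  { apply (Rmult_le_reg_r (cos y)); [exact hcos |].
    pose proof (id_mul_cos_le_sin y hy). pose proof robin_phase_sin_cos.
    assert ((2 * y + PI) * (y * cos y) <= (2 * y + PI) * sin y)
      by (apply Rmult_le_compat_l; lra).
    nra. }
  replace (PI ^ 2 / (4 * a ^ 2) + 2 * alpha / a)
    with ((PI ^ 2 + 8 * (a * alpha)) / (2 * a) ^ 2) by (field; lra).
  rewrite sqrt_div_sqr by lra.
  set (b := a * alpha) in *. assert (hb : 0 < b) by (unfold b; nra).
  assert (hw : sqrt (PI ^ 2 + 8 * b) ^ 2 = PI ^ 2 + 8 * b) by (apply pow2_sqrt; nra).
  pose proof (sqrt_pos (PI ^ 2 + 8 * b)). set (w := sqrt (PI ^ 2 + 8 * b)) in *.
  (* the positive root of t^2 - PI t - 2 b *)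
  set (r := (PI + w) / 2).
  assert (htr : 2 * y + PI <= r).
  { apply (quadratic_le_reg 1 (- PI)); [lra | unfold r; lra |].
    unfold r. nra. }
  replace (PI / (2 * a) + w / (2 * a)) with (r / a) by (unfold r; field; lra).
  apply sqr_div_le; lra.
Qed.

Lemma robin_lambda2_le_large :
  ((2 * y + PI) / a) ^ 2 <= PI ^ 2 / (16 * a ^ 4 * alpha ^ 2)
    * (4 * a * alpha - PI ^ 2 + sqrt (PI ^ 4 + 16 * a ^ 2 * alpha ^ 2)) ^ 2.
Proof.
  pose proof PI_bounds.
  assert (hcos : 0 < cos y) by (apply cos_gt_0; lra).
  assert (htan : PI ^ 3 * y <= a * alpha * (PI ^ 2 - 4 * y ^ 2)).
  { apply (Rmult_le_reg_r (cos y)); [exact hcos |].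
    pose proof (cubic_mul_cos_le_sin y hy). pose proof robin_phase_sin_cos.
    replace (a * alpha * (PI ^ 2 - 4 * y ^ 2) * cos y)
      with (a * alpha * cos y * (PI ^ 2 - 4 * y ^ 2)) by ring.
    nra. }
  replace (16 * a ^ 2 * alpha ^ 2) with (16 * (a * alpha) ^ 2) by ring.
  set (b := a * alpha) in *. assert (hb : 0 < b) by (unfold b; nra).
  assert (hv : sqrt (PI ^ 4 + 16 * b ^ 2) ^ 2 = PI ^ 4 + 16 * b ^ 2) by (apply pow2_sqrt; nra).
  pose proof (sqrt_pos (PI ^ 4 + 16 * b ^ 2)). set (v := sqrt (PI ^ 4 + 16 * b ^ 2)) in *.
  (* the positive root of 2 b t^2 + (PI^3 - 4 PI b) t - PI^4 *)
  set (r := PI * (4 * b - PI ^ 2 + v) / (4 * b)).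
  assert (hroot : 2 * b * r ^ 2 + (PI ^ 3 - 4 * PI * b) * r = PI ^ 4).
  { apply (Rmult_eq_reg_r (8 * b)); [| lra].
    transitivity (PI ^ 2 * v ^ 2 - PI ^ 2 * (PI ^ 4 + 16 * b ^ 2) + 8 * b * PI ^ 4);
      [unfold r; field; lra | rewrite hv; ring]. }
  assert (htr : 2 * y + PI <= r).
  { apply (quadratic_le_reg (2 * b) (PI ^ 3 - 4 * PI * b)); [lra | |].
    - replace (2 * (2 * b) * r + (PI ^ 3 - 4 * PI * b)) with (PI * v)
        by (unfold r; field; lra).
      nra.
    - rewrite hroot. nra. }
  replace (PI ^ 2 / (16 * a ^ 4 * alpha ^ 2) * (4 * a * alpha - PI ^ 2 + v) ^ 2)
    with ((r / a) ^ 2) by (unfold r, b; field; lra).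
  apply sqr_div_le; lra.
Qed.

End RobinBounds.

Theorem propositionA2 (a alpha : R) (ha : 0 < a) (halpha : 0 < alpha) :
  (exists l, is_robin_lambda2 a alpha l) /\
  (forall l, is_robin_lambda2 a alpha l ->
     (2 * PI - a * alpha
        + sqrt (4 * PI ^ 2 + 12 * a * alpha * PI + alpha ^ 2 * a ^ 2)) ^ 2
       / (16 * a ^ 2) <= l /\
     (a * alpha <= PI ^ 2 / 2 ->
        l <= (PI / (2 * a) + sqrt (PI ^ 2 / (4 * a ^ 2) + 2 * alpha / a)) ^ 2) /\
     (PI ^ 2 / 2 <= a * alpha ->
        l <= PI ^ 2 / (16 * a ^ 4 * alpha ^ 2)
             * (4 * a * alpha - PI ^ 2 + sqrt (PI ^ 4 + 16 * a ^ 2 * alpha ^ 2)) ^ 2)).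
Proof.
  split; [exact (robin_lambda2_exists a alpha ha halpha) |].
  intros l hl.
  destruct (proj1 (is_robin_lambda2_phase a alpha l ha) hl) as [y [hy [-> hphase]]].
  (* Both upper bounds hold for every a alpha; the case split only says which is sharper. *)
  split; [| split; intros _].
  - exact (robin_lambda2_ge a alpha y ha halpha hy hphase).
  - exact (robin_lambda2_le_small a alpha y ha halpha hy hphase).
  - exact (robin_lambda2_le_large a alpha y ha halpha hy hphase).
Qed.
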